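(* Let $n\ge 2$ be even and $k\ge 3$. Then every Jenga-like configuration $Q$ of the $(n,k)$-game satisfies $$ g(Q)\le \frac{n(n-2)(k-2)}{2}. $$
   Context: The $(n,k)$-game is played with $nk$ blocks, each a box of length $n$, width $1$, height $1$. Level $i$ occupies heights $[i-1,i]$ and has $n$ slots $j=1,\dots,n$; a block in slot $j$ of an odd level $i$ is $[0,n]\times[j-1,j]\times[i-1,i]$, and of an even level $i$ is $[j-1,j]\times[0,n]\times[i-1,i]$. The initial configuration has $k$ full levels. A move removes exactly one block from a level which is not the topmost level and, when the topmost level is incomplete (fewer than $n$ blocks), is not the level immediately below the topmost level, and places it in an empty slot of the topmost level if that level is incomplete, or in a slot of a new level on top otherwise. A Jenga-like configuration is one obtainable from the initial configuration by finitely many moves in which every level up to the topmost contains at least one block. $g(Q)$ is the genus of the boundary surface of the union of the blocks of $Q$ (a connected closed polyhedral surface). *)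

From HB Require Import structures.
From mathcomp Require Import all_boot all_order all_algebra.
Set Implicit Arguments. Unset Strict Implicit. Unset Printing Implicit Defensive.
Import Order.TTheory GRing.Theory Num.Theory.

(* A configuration is the list of its levels, bottom (level 1) first;  *)
(* a level is the set of its occupied slots, slot j (1 <= j <= n) being *)
(* represented by the ordinal j-1 : 'I_n.  The topmost level is the     *)
(* last element of the list.                                           *)

Definition config (n : nat) := seq {set 'I_n}.

Definition initial (n k : nat) : config n := nseq k [set: 'I_n].

(* One move: remove block j from level i (0-based), which is not the   *)
(* topmost and, if the top is incomplete, not the one just below it;   *)
(* then put it in the empty slot s of the top (if incomplete) or in    *)
(* slot s of a new level on top (if the top is complete).              *)
Definition move (n : nat) (Q Q' : config n) : Prop :=
  let h := size Q in
  let top := last set0 Q in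
  exists (i : nat) (j s : 'I_n),
    [/\ i.+1 < h,
        j \in nth set0 Q i,
        (#|top| < n -> i.+2 != h) &
        let Q1 := set_nth set0 Q i (nth set0 Q i :\ j) in
        if #|top| < n then s \notin top /\ Q' = set_nth set0 Q1 h.-1 (s |: top)
        else Q' = rcons Q1 [set s]].

Local Unset Implicit Arguments.
Inductive reachable (n k : nat) : config n -> Prop :=
  | reach0 : reachable n k (initial n k)
  | reachS (Q Q' : config n) : reachable n k Q -> move Q Q' -> reachable n k Q'.

Local Set Implicit Arguments.
Definition jenga_like (n k : nat) (Q : config n) : Prop :=
  reachable n k Q /\ all (fun L => L != set0) Q.

(* Geometry.  Unit cube with integer corner (a,b,c) is                 *)
(* [a,a+1]x[b,b+1]x[c,c+1].  Level c+1 occupies heights [c,c+1]; if    *)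
(* c+1 is odd a block in slot j fills all cubes (_, j-1, c), if c+1 is *)
(* even it fills all cubes (j-1, _, c).                                *)

Definition occ_cube (n : nat) (Q : config n) (a b c : nat) : bool :=
  [&& a < n, b < n, c < size Q &
      [exists j : 'I_n,
         (j \in nth set0 Q c) && (val j == (if ~~ odd c then b else a))]].

(* Cells of the cubical lattice in doubled integer coordinates: a cell *)
(* is (u,v,w) : int^3; an odd coordinate u means the open interval     *)
(* (u-1,u+1)/2, an even one the point u/2.  Cubes have three odd       *)
(* coordinates (cube (a,b,c) <-> (2a+1,2b+1,2c+1)), square faces two,  *)
(* edges one, vertices none.                                           *)
Definition oddz (u : int) : bool := odd `|u|%N.

Definition nodd (u v w : int) : nat := oddz u + oddz v + oddz w.

Definition occD (n : nat) (Q : config n) (u v w : int) : bool :=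
  [&& (0 < u)%R, (0 < v)%R, (0 < w)%R, oddz u, oddz v, oddz w &
      occ_cube Q (`|u|%N)./2 (`|v|%N)./2 (`|w|%N)./2].

(* A square face of the lattice lies on the boundary of the union of   *)
(* the blocks iff exactly one of its two adjacent cubes is occupied.   *)
Definition bface (n : nat) (Q : config n) (u v w : int) : bool :=
  (nodd u v w == 2) &&
  [|| ~~ oddz u && (occD Q (u - 1) v w != occD Q (u + 1) v w),
      ~~ oddz v && (occD Q u (v - 1) w != occD Q u (v + 1) w)
    | ~~ oddz w && (occD Q u v (w - 1) != occD Q u v (w + 1))]%R.

Definition subcoord (c f : int) : bool :=
  if oddz f then (`|c - f|%N <= 1)%N else c == f.

Definition subcell (c f : int * int * int) : bool :=
  [&& subcoord c.1.1 f.1.1, subcoord c.1.2 f.1.2 & subcoord c.2 f.2].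

(* finite box of doubled coordinates containing every boundary cell    *)
Definition cellT (n h : nat) :=
  ('I_(2 * n).+1 * 'I_(2 * n).+1 * 'I_(2 * h).+1)%type.

Definition toZ (n h : nat) (c : cellT n h) : int * int * int :=
  (Posz (val c.1.1), Posz (val c.1.2), Posz (val c.2)).

(* the cells of dimension d of the boundary surface (as a cubical      *)
(* complex: boundary squares together with their edges and vertices)   *)
Definition bcells (n : nat) (Q : config n) (d : nat) : {set cellT n (size Q)} :=
  [set c : cellT n (size Q) |
     (nodd (toZ c).1.1 (toZ c).1.2 (toZ c).2 == d) &&
     [exists f : cellT n (size Q),
        bface Q (toZ f).1.1 (toZ f).1.2 (toZ f).2 && subcell (toZ c) (toZ f)]].

Definition euler_char (n : nat) (Q : config n) : int :=
  (#|bcells Q 0|%:Z - #|bcells Q 1|%:Z + #|bcells Q 2|%:Z)%R.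

(* genus g(Q) of the (connected, closed, orientable) boundary surface, *)
(* via chi = 2 - 2g                                                    *)
Definition genus (n : nat) (Q : config n) : rat :=
  ((2 - euler_char Q)%:~R / 2)%R.

Arguments jenga_like : clear implicits.

From HB Require Import structures.
From mathcomp Require Import all_boot all_order all_algebra.
From mathcomp Require Import zify ring.
Set Implicit Arguments. Unset Strict Implicit. Unset Printing Implicit Defensive.
Import Order.TTheory GRing.Theory Num.Theory.

(* The boundary surface is a cubical complex, and a cell of the lattice lies on it iff
   some but not all of the cubes around it are occupied.  So its Euler characteristic
   is the alternating count of the cells in the closure of the occupied region minus
   that of the cells in its interior.  A cube of level y is occupied iff its two
   horizontal coordinates lie in two sets, one the full range [0, n) and the other the
   occupied slots of the level; the counts therefore factor, layer by layer, into Euler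
   characteristics of unions of unit intervals, i.e. into numbers of runs of
   consecutive blocks.  With r_y the number of runs of level y this gives
   chi = r_0 + sum_y (r_y + r_(y+1) - 2 r_y r_(y+1)), and, as the level just below the
   top stays full, g = sum_y r_y (r_(y+1) - 1) over the levels below the top three.
   For even n a level L has at most min(|L|, n/2) runs, and the blocks in those levels
   number at most n (k - 2). *)

(** * Euler characteristics in one dimension *)

Definition run_start (p : pred nat) (x : nat) : bool := p x && ~~ ((0 < x) && p x.-1).

Definition runs (p : pred nat) (N : nat) : nat := \sum_(0 <= x < N) run_start p x.

Lemma eq_runs (p q : pred nat) N :
  (forall x, x < N -> p x = q x) -> runs p N = runs q N.
Proof.
move=> epq; apply: eq_big_nat => x /andP[_ ltxN].
by rewrite /run_start !epq //; apply: leq_ltn_trans ltxN; apply: leq_pred.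
Qed.

Lemma runsS (p : pred nat) N : ~~ p N -> runs p N.+1 = runs p N.
Proof. by move=> /negbTE pN; rewrite /runs big_nat_recr //= /run_start pN addn0. Qed.

Lemma runs_le_count p N : runs p N <= \sum_(0 <= x < N) p x.
Proof. by apply: leq_sum => x _; rewrite /run_start; case: (p x) => /=; rewrite ?leq_b1. Qed.

Lemma runs_le_uphalf p N : runs p N <= uphalf N.
Proof.
suff: 2 * runs p N <= N + ((0 < N) && p N.-1) by case: (_ && _); lia.
elim: N => [|N IH]; first by rewrite /runs big_geq.
rewrite /runs big_nat_recr //= -/(runs p N) /run_start.
case: N IH => [|N]; first by rewrite /runs big_geq //; case: (p 0).
by case: (p N); case: (p N.+1) => /=; lia.
Qed.

Lemma runs_full N : 0 < N -> runs (fun a => a < N) N = 1.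
Proof.
move=> N_gt0; rewrite /runs big_ltn // /run_start /= N_gt0 big1_seq // => x /andP[_].
rewrite mem_index_iota => /andP[x_gt0 ltxN].
by rewrite /= ltxN x_gt0 (leq_ltn_trans (leq_pred x) ltxN).
Qed.

(* Doubled coordinates: an even u stands for the point u/2, an odd u for the open unit
   interval around u/2; [nbrs u] lists the unit intervals whose closure contains u
   (for u = 0 the entry u.-1 = 0 is even, so it never counts as an interval). *)
Definition nbrs (u : nat) : seq nat := if odd u then [:: u] else [:: u.-1; u.+1].

Definition unit_in (p : pred nat) (x : nat) : bool := odd x && p x./2.

Definition in_closure1 (p : pred nat) (u : nat) : bool := has (unit_in p) (nbrs u).
Definition in_interior1 (p : pred nat) (u : nat) : bool := all (unit_in p) (nbrs u).

Lemma nbrs_nil u : nbrs u != [::].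
Proof. by rewrite /nbrs; case: (odd u). Qed.

Lemma head_nbrs u : head 0 (nbrs u) \in nbrs u.
Proof. by rewrite /nbrs; case: (odd u); apply: mem_head. Qed.

Lemma nbrs_even u : ~~ odd u -> (u.-1 \in nbrs u) && (u.+1 \in nbrs u).
Proof. by rewrite /nbrs => /negbTE->; rewrite !inE !eqxx orbT. Qed.

Lemma nbrs_neq (f : nat -> bool) u a a' : a \in nbrs u -> a' \in nbrs u ->
  f a != f a' -> ~~ odd u && (f u.-1 != f u.+1).
Proof.
rewrite /nbrs; case: (odd u); rewrite !inE; first by move=> /eqP-> /eqP->; rewrite eqxx.
by case/orP=> /eqP-> /orP[]/eqP->; rewrite ?eqxx //= eq_sym.
Qed.

Lemma nbrs_double x : nbrs (x.+1).*2 = [:: x.*2.+1; (x.+1).*2.+1].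
Proof. by rewrite /nbrs odd_double doubleS. Qed.

Lemma nbrs_double_succ x : nbrs x.*2.+1 = [:: x.*2.+1].
Proof. by rewrite /nbrs /= odd_double. Qed.

Lemma unit_in_double_pred p x : unit_in p x.*2.-1 = (0 < x) && p x.-1.
Proof. by case: x => [|x] //; rewrite doubleS /unit_in /= odd_double uphalf_double. Qed.

Lemma unit_in_double_succ p x : unit_in p x.*2.+1 = p x.
Proof. by rewrite /unit_in /= odd_double uphalf_double. Qed.

Lemma in_closure1_double p x : in_closure1 p x.*2 = ((0 < x) && p x.-1) || p x.
Proof.
by rewrite /in_closure1 /nbrs odd_double /= unit_in_double_pred unit_in_double_succ orbF.
Qed.

Lemma in_closure1_double_succ p x : in_closure1 p x.*2.+1 = p x.
Proof. by rewrite /in_closure1 nbrs_double_succ /= unit_in_double_succ orbF. Qed.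

Lemma in_interior1_double p x : in_interior1 p x.*2 = [&& 0 < x, p x.-1 & p x].
Proof.
rewrite /in_interior1 /nbrs odd_double /= unit_in_double_pred unit_in_double_succ.
by rewrite andbT andbA.
Qed.

Lemma in_interior1_double_succ p x : in_interior1 p x.*2.+1 = p x.
Proof. by rewrite /in_interior1 nbrs_double_succ /= unit_in_double_succ andbT. Qed.

Lemma in_closure1W (p q : pred nat) u :
  (forall a, p a -> q a) -> in_closure1 p u -> in_closure1 q u.
Proof. by move=> pq; apply: sub_has => x /andP[ox /pq]; rewrite /unit_in ox. Qed.

Lemma in_interior1W (p q : pred nat) u :
  (forall a, p a -> q a) -> in_interior1 p u -> in_interior1 q u.
Proof. by move=> pq; apply: sub_all => x /andP[ox /pq]; rewrite /unit_in ox. Qed.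

Section AlternatingSums.
Local Open Scope ring_scope.

Lemma big_nat_double (R : nmodType) (G : nat -> R) N :
  \sum_(0 <= u < N.*2.+1) G u = \sum_(0 <= x < N.+1) G x.*2 + \sum_(0 <= x < N) G x.*2.+1.
Proof.
elim: N => [|N IH]; first by rewrite big_nat1 big_nat1 big_geq // addr0.
rewrite doubleS 2?big_nat_recr //= IH.
rewrite [X in _ = X + _]big_nat_recr //= [X in _ = _ + X]big_nat_recr //= doubleS.
by rewrite -!addrA; congr (_ + _); rewrite [RHS]addrC addrA.
Qed.

Definition alt_sum (N : nat) (X : pred nat) : int :=
  \sum_(0 <= u < N.*2.+1) (-1) ^+ u * (X u)%:Z.

Lemma eq_alt_sum N (X Y : pred nat) : X =1 Y -> alt_sum N X = alt_sum N Y.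
Proof. by move=> eXY; apply: eq_bigr => u _; rewrite eXY. Qed.

Lemma alt_sum_even_odd N X :
  alt_sum N X = \sum_(0 <= x < N.+1) (X x.*2)%:Z - \sum_(0 <= x < N) (X x.*2.+1)%:Z.
Proof.
rewrite /alt_sum big_nat_double -sumrN; congr (_ + _); apply: eq_bigr => x _.
  by rewrite -signr_odd odd_double mul1r.
by rewrite -signr_odd /= odd_double mulN1r.
Qed.

Lemma runsZ p N : (runs p N)%:Z = \sum_(0 <= x < N) (run_start p x)%:Z.
Proof. exact: (big_morph Posz PoszD (erefl 0%:Z)). Qed.

(* The Euler characteristics of the union of the unit intervals [a, a + 1], a \in p,
   and of its interior. *)
Lemma alt_sum_closure1 (p : pred nat) N :
  (forall a, p a -> a < N)%N -> alt_sum N (in_closure1 p) = runs p N.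
Proof.
move=> p_lt; rewrite -runsS; last by apply/negP => /p_lt; rewrite ltnn.
have split_or x : (in_closure1 p x.*2)%:Z = ((0 < x)%N && p x.-1)%:Z + (run_start p x)%:Z.
  by rewrite in_closure1_double /run_start; case: (_ && _); case: (p x).
rewrite alt_sum_even_odd runsZ.
under eq_bigr => x _ do rewrite split_or.
under [X in _ - X]eq_bigr => x _ do rewrite in_closure1_double_succ.
rewrite big_split /= addrAC [X in X + _](_ : _ = 0) ?add0r //.
by apply/eqP; rewrite subr_eq0 big_nat_recl //= add0r.
Qed.

Lemma alt_sum_interior1 (p : pred nat) N :
  (forall a, p a -> a < N)%N -> alt_sum N (in_interior1 p) = - (runs p N)%:Z.
Proof.
move=> p_lt; have pN : p N = false by apply/negP => /p_lt; rewrite ltnn.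
rewrite -runsS ?pN //.
have split_and x : (in_interior1 p x.*2)%:Z = (p x)%:Z - (run_start p x)%:Z.
  by rewrite in_interior1_double /run_start; case: (0 < x)%N; case: (p x.-1); case: (p x).
rewrite alt_sum_even_odd runsZ.
under eq_bigr => x _ do rewrite split_and.
under [X in _ - X]eq_bigr => x _ do rewrite in_interior1_double_succ.
by rewrite sumrB big_nat_recr //= pN addr0 addrAC subrr add0r.
Qed.

Lemma alt_sum_closure1I (p q : pred nat) N : (0 < N)%N ->
  (forall a, p a -> a < N)%N -> (forall a, q a -> a < N)%N ->
  p = (fun a => a < N)%N \/ q = (fun a => a < N)%N ->
  alt_sum N (fun u => in_closure1 p u && in_closure1 q u) = (runs p N * runs q N)%N.
Proof.
move=> N_gt0 p_lt q_lt.
have full_l (r s : pred nat) : (forall a, s a -> a < N)%N -> r = (fun a => a < N)%N ->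
    alt_sum N (fun u => in_closure1 r u && in_closure1 s u) = (runs r N * runs s N)%N.
  move=> s_lt ->; rewrite runs_full // mul1n -alt_sum_closure1 //; apply: eq_alt_sum => u.
  by apply/andP/idP => [[]//|su]; split=> //; apply: in_closure1W su.
case=> [/(full_l _ _ q_lt) //|/(full_l _ _ p_lt)]; rewrite mulnC => <-.
by apply: eq_alt_sum => u; apply: andbC.
Qed.

Lemma alt_sum_interior1I (p q : pred nat) N : (0 < N)%N ->
  (forall a, p a -> a < N)%N -> (forall a, q a -> a < N)%N ->
  p = (fun a => a < N)%N \/ q = (fun a => a < N)%N ->
  alt_sum N (fun u => in_interior1 p u && in_interior1 q u) = - (runs p N * runs q N)%N%:Z.
Proof.
move=> N_gt0 p_lt q_lt.
have full_l (r s : pred nat) : (forall a, s a -> a < N)%N -> r = (fun a => a < N)%N ->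
    alt_sum N (fun u => in_interior1 r u && in_interior1 s u) = - (runs r N * runs s N)%N%:Z.
  move=> s_lt ->; rewrite runs_full // mul1n -alt_sum_interior1 //; apply: eq_alt_sum => u.
  by apply/andP/idP => [[]//|su]; split=> //; apply: in_interior1W su.
case=> [/(full_l _ _ q_lt) //|/(full_l _ _ p_lt)]; rewrite mulnC => <-.
by apply: eq_alt_sum => u; apply: andbC.
Qed.

Definition alt_sum2 (N : nat) (F : nat -> nat -> int) : int :=
  \sum_(0 <= u < N.*2.+1) \sum_(0 <= v < N.*2.+1) (-1) ^+ (u + v) * F u v.

Lemma eq_alt_sum2 N (F G : nat -> nat -> int) : F =2 G -> alt_sum2 N F = alt_sum2 N G.
Proof. by move=> eFG; apply: eq_bigr => u _; apply: eq_bigr => v _; rewrite eFG. Qed.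

Lemma alt_sum2D N (F G : nat -> nat -> int) :
  alt_sum2 N (fun u v => F u v + G u v) = alt_sum2 N F + alt_sum2 N G.
Proof.
rewrite -big_split; apply: eq_bigr => u _; rewrite -big_split.
by apply: eq_bigr => v _; rewrite mulrDr.
Qed.

Lemma alt_sum2B N (F G : nat -> nat -> int) :
  alt_sum2 N (fun u v => F u v - G u v) = alt_sum2 N F - alt_sum2 N G.
Proof.
rewrite -sumrB; apply: eq_bigr => u _; rewrite -sumrB.
by apply: eq_bigr => v _; rewrite mulrBr.
Qed.

Lemma alt_sum2_prod N (X Y : pred nat) :
  alt_sum2 N (fun u v => (X u && Y v)%:Z) = alt_sum N X * alt_sum N Y.
Proof.
rewrite /alt_sum2 /alt_sum big_distrl; apply: eq_bigr => u _.
by rewrite big_distrr; apply: eq_bigr => v _; rewrite -mulnb PoszM exprD mulrACA.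
Qed.

End AlternatingSums.

(** * The boundary complex *)

Lemma subcoordE (x y : nat) : subcoord x y = if odd y then y \in nbrs x else x == y.
Proof.
rewrite /subcoord /oddz /nbrs /=; case: (boolP (odd y)) => // oy.
by case: (boolP (odd x)) => ox; rewrite !inE; lia.
Qed.

Lemma has_prod (T : eqType) (P R : pred T) s t :
  has (fun a => has (fun b => P a && R b) t) s = has P s && has R t.
Proof.
apply/hasP/andP => [[a sa /hasP[b tb /andP[Pa Rb]]]|[/hasP[a sa Pa] /hasP[b tb Rb]]].
  by split; apply/hasP; [exists a|exists b].
by exists a => //; apply/hasP; exists b; rewrite ?Pa.
Qed.

Lemma all_prod (T : eqType) (P R : pred T) s t : s != [::] -> t != [::] ->
  all (fun a => all (fun b => P a && R b) t) s = all P s && all R t.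
Proof.
case: s => // a0 s _; case: t => // b0 t _.
apply/allP/andP => [st|[/allP Ps /allP Rt] a sa]; last by apply/allP => b tb; rewrite Ps ?Rt.
split; apply/allP => x xs.
  by have /allP/(_ b0 (mem_head _ _))/andP[] := st x xs.
by have /allP/(_ x xs)/andP[] := st a0 (mem_head _ _).
Qed.

Section Boundary.
Variables (n : nat) (Q : config n).
Local Notation h := (size Q).

Definition occ (a b c : nat) : bool := occD Q a b c.

Definition in_closure (u v w : nat) : bool :=
  has (fun c => has (fun a => has (fun b => occ a b c) (nbrs v)) (nbrs u)) (nbrs w).

Definition in_interior (u v w : nat) : bool :=
  all (fun c => all (fun a => all (fun b => occ a b c) (nbrs v)) (nbrs u)) (nbrs w).

Lemma occ_bounded a b c : occ a b c ->
  [/\ odd a && (a < (2 * n).+1), odd b && (b < (2 * n).+1) & odd c && (c < (2 * h).+1)].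
Proof.
rewrite /occ /occD /oddz /occ_cube /=.
case/and5P=> _ _ _ oa /and3P[ob oc /and4P[an bn ch _]].
by rewrite oa ob oc; split; lia.
Qed.

Lemma occ_either a b c a' b' c' : occ a b c != occ a' b' c' -> occ a b c || occ a' b' c'.
Proof. by case: (occ a b c); case: (occ a' b' c'). Qed.

Lemma bfaceE (u v w : nat) : bface Q u v w =
  (odd u + odd v + odd w == 2) &&
  [|| ~~ odd u && (occ u.-1 v w != occ u.+1 v w),
      ~~ odd v && (occ u v.-1 w != occ u v.+1 w)
    | ~~ odd w && (occ u v w.-1 != occ u v w.+1)].
Proof.
have predz m : (Posz m - 1)%R = if m is m'.+1 then Posz m' else (-1)%R.
  by case: m => // m; rewrite -addn1 PoszD addrK.
have succz m : (Posz m + 1)%R = Posz m.+1 by rewrite -addn1 PoszD.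
rewrite /bface /occ !predz !succz.
by case: u => [|u]; case: v => [|v]; case: w => [|w]; rewrite /occD ?andbF.
Qed.

Lemma in_closure_nbrs u v w a b c :
  a \in nbrs u -> b \in nbrs v -> c \in nbrs w -> occ a b c -> in_closure u v w.
Proof.
move=> au bv cw abc; apply/hasP; exists c => //.
by apply/hasP; exists a => //; apply/hasP; exists b.
Qed.

Lemma in_interior_nbrs u v w a b c :
  a \in nbrs u -> b \in nbrs v -> c \in nbrs w -> in_interior u v w -> occ a b c.
Proof. by move=> au bv cw /allP/(_ c cw)/allP/(_ a au)/allP/(_ b bv). Qed.

Lemma in_interior_closure u v w : in_interior u v w -> in_closure u v w.
Proof.
move=> uvw; have au := head_nbrs u; have bv := head_nbrs v; have cw := head_nbrs w.
exact: in_closure_nbrs au bv cw (in_interior_nbrs au bv cw uvw).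
Qed.

Lemma in_interior_cube u v w :
  odd u -> odd v -> odd w -> in_interior u v w = in_closure u v w.
Proof. by rewrite /in_interior /in_closure /nbrs => -> -> ->; rewrite /= !andbT !orbF. Qed.

Lemma in_boundary_nbrs u v w a b c a' b' c' :
  a \in nbrs u -> b \in nbrs v -> c \in nbrs w ->
  a' \in nbrs u -> b' \in nbrs v -> c' \in nbrs w ->
  occ a b c != occ a' b' c' -> in_closure u v w && ~~ in_interior u v w.
Proof.
move=> au bv cw au' bv' cw'.
case abc: (occ a b c); case abc': (occ a' b' c') => // _.
  rewrite (in_closure_nbrs au bv cw abc); apply/negP.
  by move/(in_interior_nbrs au' bv' cw'); rewrite abc'.
rewrite (in_closure_nbrs au' bv' cw' abc'); apply/negP.
by move/(in_interior_nbrs au bv cw); rewrite abc.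
Qed.

Lemma bface_in_boundary (u v w fu fv fw : nat) : bface Q fu fv fw ->
  subcell (Posz u, Posz v, Posz w) (Posz fu, Posz fv, Posz fw) ->
  in_closure u v w && ~~ in_interior u v w.
Proof.
rewrite bfaceE /subcell !subcoordE /=.
case/andP=> two /or3P[/andP[eu d]|/andP[ev d]|/andP[ew d]].
- have [-> ->] : odd fv /\ odd fw by lia.
  rewrite (negbTE eu) => /and3P[/eqP ufu fvv fww]; rewrite -ufu in eu d.
  by case/andP: (nbrs_even eu) => u1 u2; apply: (in_boundary_nbrs u1 fvv fww u2 fvv fww d).
- have [-> ->] : odd fu /\ odd fw by lia.
  rewrite (negbTE ev) => /and3P[fuu /eqP vfv fww]; rewrite -vfv in ev d.
  by case/andP: (nbrs_even ev) => v1 v2; apply: (in_boundary_nbrs fuu v1 fww fuu v2 fww d).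
- have [-> ->] : odd fu /\ odd fv by lia.
  rewrite (negbTE ew) => /and3P[fuu fvv /eqP wfw]; rewrite -wfw in ew d.
  by case/andP: (nbrs_even ew) => w1 w2; apply: (in_boundary_nbrs fuu fvv w1 fuu fvv w2 d).
Qed.

Definition on_boundary_face (u v w : nat) : bool :=
  [exists f : cellT n h,
     bface Q (toZ f).1.1 (toZ f).1.2 (toZ f).2 && subcell (Posz u, Posz v, Posz w) (toZ f)].

Lemma on_boundary_face_of u v w fu fv fw :
  fu < (2 * n).+1 -> fv < (2 * n).+1 -> fw < (2 * h).+1 -> bface Q fu fv fw ->
  subcell (Posz u, Posz v, Posz w) (Posz fu, Posz fv, Posz fw) -> on_boundary_face u v w.
Proof.
move=> hu hv hw f fc; apply/existsP.
by exists (Ordinal hu, Ordinal hv, Ordinal hw); rewrite /toZ /= f.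
Qed.

Lemma on_boundary_face_x u v w a a' b c : u < (2 * n).+1 ->
  a \in nbrs u -> a' \in nbrs u -> b \in nbrs v -> c \in nbrs w ->
  occ a b c != occ a' b c -> on_boundary_face u v w.
Proof.
move=> hu au au' bv cw d; have /andP[eu /= d'] := nbrs_neq (f := fun x => occ x b c) au au' d.
case/orP: (occ_either d) => /occ_bounded[_ /andP[ob hb] /andP[oc hc]];
  apply: (on_boundary_face_of hu hb hc);
  by rewrite ?bfaceE /subcell ?subcoordE (negbTE eu) ob oc /= ?d' ?eqxx ?bv ?cw.
Qed.

Lemma on_boundary_face_y u v w a b b' c : v < (2 * n).+1 ->
  a \in nbrs u -> b \in nbrs v -> b' \in nbrs v -> c \in nbrs w ->
  occ a b c != occ a b' c -> on_boundary_face u v w.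
Proof.
move=> hv au bv bv' cw d; have /andP[ev /= d'] := nbrs_neq (f := fun y => occ a y c) bv bv' d.
case/orP: (occ_either d) => /occ_bounded[/andP[oa ha] _ /andP[oc hc]];
  apply: (on_boundary_face_of ha hv hc);
  by rewrite ?bfaceE /subcell ?subcoordE (negbTE ev) oa oc /= ?d' ?eqxx ?au ?cw ?orbT.
Qed.

Lemma on_boundary_face_z u v w a b c c' : w < (2 * h).+1 ->
  a \in nbrs u -> b \in nbrs v -> c \in nbrs w -> c' \in nbrs w ->
  occ a b c != occ a b c' -> on_boundary_face u v w.
Proof.
move=> hw au bv cw cw' d; have /andP[ew /= d'] := nbrs_neq (f := fun z => occ a b z) cw cw' d.
case/orP: (occ_either d) => /occ_bounded[/andP[oa ha] /andP[ob hb] _];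
  apply: (on_boundary_face_of ha hb hw);
  by rewrite ?bfaceE /subcell ?subcoordE (negbTE ew) oa ob /= ?d' ?eqxx ?au ?bv ?orbT.
Qed.

(* Walk from an empty cube around the cell to an occupied one, changing one coordinate
   at a time: some step crosses a boundary face containing the cell. *)
Lemma in_boundary_on_face u v w : u < (2 * n).+1 -> v < (2 * n).+1 -> w < (2 * h).+1 ->
  in_closure u v w -> ~~ in_interior u v w -> on_boundary_face u v w.
Proof.
move=> hu hv hw /hasP[c1 cw1 /hasP[a1 au1 /hasP[b1 bv1 abc1]]].
move=> /allPn[c0 cw0 /allPn[a0 au0 /allPn[b0 bv0 abc0]]].
case e1: (occ a1 b0 c0).
  by apply: (on_boundary_face_x hu au0 au1 bv0 cw0); rewrite e1 (negbTE abc0).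
case e2: (occ a1 b1 c0).
  by apply: (on_boundary_face_y hv au1 bv0 bv1 cw0); rewrite e1 e2.
by apply: (on_boundary_face_z hw au1 bv1 cw0 cw1); rewrite e2 abc1.
Qed.

Lemma on_boundary_faceE (c : cellT n h) :
  [exists f : cellT n h, bface Q (toZ f).1.1 (toZ f).1.2 (toZ f).2 && subcell (toZ c) (toZ f)]
  = in_closure c.1.1 c.1.2 c.2 && ~~ in_interior c.1.1 c.1.2 c.2.
Proof.
apply/idP/andP => [/existsP[f /andP[/bface_in_boundary fc /fc /andP//]]|[]].
exact: in_boundary_on_face (ltn_ord _) (ltn_ord _) (ltn_ord _).
Qed.

End Boundary.

Section Levels.
Variables (n : nat) (Q : config n).

Definition occ_slot (y a : nat) : bool :=
  [exists j : 'I_n, (j \in nth set0 Q y) && (val j == a)].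

Definition level_card (y : nat) : nat := #|nth set0 Q y|.

(* Level y (counted from 0) is the product [xproj y * yproj y] of the set of its
   occupied slots and the full range [0, n), in an order alternating with y. *)
Definition xproj (y : nat) : pred nat := if odd y then occ_slot y else (fun a => a < n).
Definition yproj (y : nat) : pred nat := if odd y then (fun a => a < n) else occ_slot y.

Lemma occ_slot_lt y a : occ_slot y a -> a < n.
Proof. by case/existsP=> j /andP[_ /eqP <-]; apply: ltn_ord. Qed.

Lemma occ_slot_level y a : occ_slot y a -> y < size Q.
Proof.
case/existsP=> j /andP[jQ _]; rewrite ltnNge; apply: contraTN jQ => hy.
by rewrite nth_default // in_set0.
Qed.

Lemma occ_slot_ord y (a : 'I_n) : occ_slot y a = (a \in nth set0 Q y).
Proof.
apply/existsP/idP => [[b /andP[Lb /eqP ba]]|La]; last by exists a; rewrite La eqxx.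
by rewrite -(val_inj ba).
Qed.

Lemma sum_occ_slot y : \sum_(0 <= a < n) occ_slot y a = level_card y.
Proof.
rewrite big_mkord (eq_bigr (fun a : 'I_n => (a \in nth set0 Q y) : nat)) => [|a _].
  by rewrite -big_mkcond sum1_card.
by rewrite occ_slot_ord.
Qed.

Lemma xproj_lt y a : xproj y a -> a < n.
Proof. by rewrite /xproj; case: (odd y) => // /occ_slot_lt. Qed.

Lemma yproj_lt y a : yproj y a -> a < n.
Proof. by rewrite /yproj; case: (odd y) => // /occ_slot_lt. Qed.

Lemma xproj_full y : xproj y = (fun a => a < n) \/ xproj y.+1 = (fun a => a < n).
Proof. by rewrite /xproj /=; case: (odd y); [right|left]. Qed.

Lemma yproj_full y : yproj y = (fun a => a < n) \/ yproj y.+1 = (fun a => a < n).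
Proof. by rewrite /yproj /=; case: (odd y); [left|right]. Qed.

Lemma occE a b c :
  occ Q a b c = odd c && (unit_in (xproj c./2) a && unit_in (yproj c./2) b).
Proof.
rewrite /occ /occD /oddz /occ_cube /unit_in /xproj /yproj /= -/(occ_slot _ _) !ltz_nat.
case: (boolP (odd a)) => oa; last by rewrite !andbF.
case: (boolP (odd b)) => ob; last by rewrite !andbF.
case: (boolP (odd c)) => oc; last by rewrite !andbF.
have [-> -> ->] : [/\ 0 < a, 0 < b & 0 < c] by split; lia.
case: (odd c./2) => /=.
  by case sa: (occ_slot _ _); rewrite ?andbF //= (occ_slot_lt sa) (occ_slot_level sa) ?andbT.
by case sb: (occ_slot _ _); rewrite ?andbF //= (occ_slot_lt sb) (occ_slot_level sb) !andbT.
Qed.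

Lemma in_closureE u v w : in_closure Q u v w =
  has (fun c => odd c && (in_closure1 (xproj c./2) u && in_closure1 (yproj c./2) v)) (nbrs w).
Proof.
apply: eq_has => c; case: (boolP (odd c)) => oc /=.
  by rewrite -has_prod; apply: eq_has => a; apply: eq_has => b; rewrite occE oc.
by apply/hasP => -[a _ /hasP[b _]]; rewrite occE (negbTE oc).
Qed.

Lemma in_interiorE u v w : in_interior Q u v w =
  all (fun c => odd c && (in_interior1 (xproj c./2) u && in_interior1 (yproj c./2) v)) (nbrs w).
Proof.
apply: eq_all => c; case: (boolP (odd c)) => oc /=.
  by rewrite -all_prod ?nbrs_nil //; apply: eq_all => a; apply: eq_all => b; rewrite occE oc.
by apply/allP => /(_ _ (head_nbrs u))/allP/(_ _ (head_nbrs v)); rewrite occE (negbTE oc).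
Qed.

End Levels.

(** * Euler characteristic of the boundary *)

Section EulerChar.
Local Open Scope ring_scope.

Lemma intb_or_and (a b c d : bool) :
  ((a && b) || (c && d))%:Z = (a && b)%:Z + (c && d)%:Z - ((a && c) && (b && d))%:Z.
Proof. by case: a; case: b; case: c; case: d. Qed.

Lemma card_setZ (T : finType) (P : pred T) : #|[set x | P x]|%:Z = \sum_x (P x)%:Z.
Proof.
rewrite -sum1dep_card big_mkcond (big_morph Posz PoszD (erefl 0%:Z)).
by apply: eq_bigr => x _; case: (P x).
Qed.

Variables (n : nat) (Q : config n).
Local Notation h := (size Q).

Definition level_runs (y : nat) : nat := runs (occ_slot Q y) n.

Definition layer_char (w : nat) : int :=
  alt_sum2 n (fun u v => (in_closure Q u v w)%:Z - (in_interior Q u v w)%:Z).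

Lemma level_runs_le_card y : (level_runs y <= level_card Q y)%N.
Proof. by rewrite -sum_occ_slot; apply: runs_le_count. Qed.

Lemma level_runs_over y : (h <= y)%N -> level_runs y = 0%N.
Proof.
move=> le_y; rewrite /level_runs /runs big1_seq // => a _; rewrite /run_start.
by have -> : occ_slot Q y a = false by apply: contraTF le_y => /occ_slot_level; rewrite -ltnNge.
Qed.

Hypothesis n_gt0 : (0 < n)%N.

Lemma level_runs_full y : nth set0 Q y = setT -> level_runs y = 1%N.
Proof.
move=> Ly; rewrite /level_runs -(runs_full n_gt0); apply: eq_runs => a lt_a.
by rewrite (lt_a : (a < n)%N) -[a]/(val (Ordinal lt_a)) occ_slot_ord Ly inE.
Qed.

Lemma runs_xproj_yproj y : (runs (xproj Q y) n * runs (yproj Q y) n)%N = level_runs y.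
Proof. by rewrite /xproj /yproj /level_runs; case: (odd y); rewrite runs_full ?muln1 ?mul1n. Qed.

Lemma layer_char_odd x : layer_char x.*2.+1 = 0.
Proof.
rewrite /layer_char alt_sum2B.
under eq_alt_sum2 => u v do
  rewrite in_closureE nbrs_double_succ /= odd_double orbF uphalf_double.
under [X in _ - X]eq_alt_sum2 => u v do
  rewrite in_interiorE nbrs_double_succ /= odd_double andbT uphalf_double.
rewrite !alt_sum2_prod !alt_sum_closure1 ?alt_sum_interior1;
  try by [apply: xproj_lt|apply: yproj_lt].
by rewrite mulrNN subrr.
Qed.

Lemma layer_char0 : layer_char 0 = level_runs 0.
Proof.
rewrite /layer_char.
under eq_alt_sum2 => u v do rewrite in_closureE in_interiorE /= orbF subr0.
by rewrite alt_sum2_prod !alt_sum_closure1 -?PoszM ?runs_xproj_yproj //; apply: yproj_lt.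
Qed.

Lemma layer_char_double y : layer_char (y.+1).*2 =
  (level_runs y)%:Z + (level_runs y.+1)%:Z - 2 * (level_runs y)%:Z * (level_runs y.+1)%:Z.
Proof.
rewrite /layer_char.
under eq_alt_sum2 => u v do
  rewrite in_closureE in_interiorE nbrs_double /= !odd_double /= !uphalf_double orbF andbT
    andbACA intb_or_and.
rewrite !alt_sum2B alt_sum2D !alt_sum2_prod !alt_sum_closure1 ?alt_sum_closure1I
  ?alt_sum_interior1I //;
  try by [apply: xproj_lt|apply: yproj_lt|apply: xproj_full|apply: yproj_full].
by rewrite -(runs_xproj_yproj y) -(runs_xproj_yproj y.+1) !PoszM; ring.
Qed.

(* Cells of dimension 0, 1, 2 are counted with signs +, -, +; a cube is never on the
   boundary, as its closure and its interior meet the same single cube. *)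
Lemma boundary_cell_sign u v w (B := in_closure Q u v w && ~~ in_interior Q u v w) :
  ((odd u + odd v + odd w == 0)%N && B)%:Z - ((odd u + odd v + odd w == 1)%N && B)%:Z
    + ((odd u + odd v + odd w == 2)%N && B)%:Z
  = (-1) ^+ w * ((-1) ^+ (u + v) * ((in_closure Q u v w)%:Z - (in_interior Q u v w)%:Z)).
Proof.
rewrite {}/B exprD -(signr_odd _ u) -(signr_odd _ v) -(signr_odd _ w).
have := @in_interior_closure _ Q u v w; have := @in_interior_cube _ Q u v w.
case: (odd u); case: (odd v); case: (odd w); case: (in_closure Q u v w);
  case: (in_interior Q u v w) => //= cube clos;
  first [by have := cube isT isT isT | by have := clos isT].
Qed.

Lemma sum_cellT (F : nat -> nat -> nat -> int) :
  \sum_(c : cellT n h) F c.1.1 c.1.2 c.2 =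
  \sum_(0 <= w < h.*2.+1) \sum_(0 <= u < n.*2.+1) \sum_(0 <= v < n.*2.+1) F u v w.
Proof.
rewrite -(pair_bigA _ (fun (i : 'I_(2 * n).+1 * 'I_(2 * n).+1) (j : 'I_(2 * h).+1) =>
  F i.1 i.2 j)) /=.
rewrite -(pair_bigA _ (fun (a b : 'I_(2 * n).+1) => \sum_(j : 'I_(2 * h).+1) F a b j)) /=.
under eq_bigr => a _ do rewrite exchange_big /=.
rewrite exchange_big /= -!mul2n big_mkord; apply: eq_bigr => w _.
by rewrite big_mkord; apply: eq_bigr => u _; rewrite big_mkord.
Qed.

Lemma euler_char_layers :
  euler_char Q = \sum_(0 <= w < h.*2.+1) (-1) ^+ w * layer_char w.
Proof.
have -> : \sum_(0 <= w < h.*2.+1) (-1) ^+ w * layer_char w =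
    \sum_(c : cellT n h) (-1) ^+ c.2 * ((-1) ^+ (c.1.1 + c.1.2) *
      ((in_closure Q c.1.1 c.1.2 c.2)%:Z - (in_interior Q c.1.1 c.1.2 c.2)%:Z)).
  rewrite (sum_cellT (fun u v w => (-1) ^+ w * ((-1) ^+ (u + v) *
    ((in_closure Q u v w)%:Z - (in_interior Q u v w)%:Z)))).
  by apply: eq_bigr => w _; rewrite mulr_sumr; apply: eq_bigr => u _; rewrite mulr_sumr.
rewrite /euler_char /bcells !card_setZ -sumrB -big_split; apply: eq_bigr => c _.
by rewrite !on_boundary_faceE; apply: boundary_cell_sign.
Qed.

Lemma euler_char_runs : euler_char Q = (level_runs 0)%:Z +
  \sum_(0 <= y < h) ((level_runs y)%:Z + (level_runs y.+1)%:Z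
                     - 2 * (level_runs y)%:Z * (level_runs y.+1)%:Z).
Proof.
rewrite euler_char_layers big_nat_double big_nat_recl //.
rewrite [X in _ + X]big1 => [|x _]; last by rewrite layer_char_odd mulr0.
rewrite addr0 /= expr0 mul1r layer_char0; congr (_ + _).
by apply: eq_bigr => y _; rewrite -signr_odd odd_double mul1r layer_char_double.
Qed.

End EulerChar.

(** * Configurations reachable by moves *)

Section Invariant.
Variable n : nat.
Implicit Types (Q : config n) (X : {set 'I_n}).

Definition nblocks Q : nat := \sum_(L <- Q) #|L|.

Definition jenga_invariant (k : nat) Q : Prop :=
  [/\ 3 <= size Q, nth set0 Q (size Q - 2) = setT, nblocks Q = n * k
    & n <= level_card Q (size Q - 3) + level_card Q (size Q).-1].

Lemma nblocksE Q : nblocks Q = \sum_(0 <= y < size Q) level_card Q y.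
Proof. exact: big_nth. Qed.

Lemma nblocks_set_nth Q i X : i < size Q ->
  nblocks (set_nth set0 Q i X) + level_card Q i = nblocks Q + #|X|.
Proof.
rewrite /level_card; elim: Q i => [|L Q IH] [|i] //= lt_i; rewrite /nblocks !big_cons.
  by ring.
by move: (IH i lt_i); rewrite /nblocks -!addnA => <-; ring.
Qed.

Lemma nblocks_rcons Q X : nblocks (rcons Q X) = nblocks Q + #|X|.
Proof. by rewrite /nblocks -cats1 big_cat big_seq1. Qed.

Lemma level_card_set_nth Q i X z :
  level_card (set_nth set0 Q i X) z = if z == i then #|X| else level_card Q z.
Proof. by rewrite /level_card nth_set_nth /=; case: eqP. Qed.

Lemma level_card_rcons Q X z : z <= size Q ->
  level_card (rcons Q X) z = if z == size Q then #|X| else level_card Q z.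
Proof. by move=> le_z; rewrite /level_card nth_rcons ltn_neqAle le_z andbT; case: eqP. Qed.

Lemma card_setU1_level Q y s :
  s \notin nth set0 Q y -> #|s |: nth set0 Q y| = (level_card Q y).+1.
Proof. by rewrite cardsU1 => ->. Qed.

Lemma full_level X : ~~ (#|X| < n) -> X = setT.
Proof. by move=> X_full; apply/eqP; rewrite eqEcard subsetT cardsT card_ord leqNgt. Qed.

Lemma jenga_invariant_initial k : 3 <= k -> jenga_invariant k (initial n k).
Proof.
move=> k_ge3; rewrite /jenga_invariant /level_card /initial /nblocks size_nseq !nth_nseq.
rewrite big_nseq !ifT ?cardsT ?card_ord ?iter_addn_0; try lia.
by split; rewrite ?leq_addr.
Qed.

Definition take_block Q (i : nat) (j : 'I_n) : config n :=
  set_nth set0 Q i (nth set0 Q i :\ j).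

Lemma size_take_block Q i j : i < size Q -> size (take_block Q i j) = size Q.
Proof. by move=> lt_i; rewrite size_set_nth; apply/maxn_idPr. Qed.

Lemma nth_take_block Q i j z : z != i -> nth set0 (take_block Q i j) z = nth set0 Q z.
Proof. by rewrite nth_set_nth /= => /negbTE->. Qed.

Lemma level_card_take_block Q i j z :
  level_card Q z <= (level_card (take_block Q i j) z).+1.
Proof.
rewrite /level_card nth_set_nth /=; case: eqP => [->|_]; last exact: leqW.
by rewrite [X in X <= _](cardsD1 j) addnC -addn1 leq_add2l leq_b1.
Qed.

Lemma level_card_take_block_neq Q i j z :
  z != i -> level_card (take_block Q i j) z = level_card Q z.
Proof. by move=> z_i; rewrite /level_card nth_take_block. Qed.

Lemma nblocks_take_block Q i j : i < size Q -> j \in nth set0 Q i ->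
  (nblocks (take_block Q i j)).+1 = nblocks Q.
Proof.
move=> lt_i Lj; have := nblocks_set_nth (nth set0 Q i :\ j) lt_i.
by rewrite /level_card (cardsD1 j (nth set0 Q i)) Lj -/(take_block Q i j); lia.
Qed.

Lemma jenga_invariant_put_top k Q i j s : jenga_invariant k Q ->
  i.+2 < size Q -> j \in nth set0 Q i -> s \notin last set0 Q ->
  jenga_invariant k (set_nth set0 (take_block Q i j) (size Q).-1 (s |: last set0 Q)).
Proof.
move=> [h_ge3 full blocks low] lt_i Lj; rewrite -nth_last => /card_setU1_level top'.
have sizeT : size (take_block Q i j) = size Q by apply: size_take_block; lia.
have blocksT : (nblocks (take_block Q i j)).+1 = nblocks Q.
  by apply: nblocks_take_block => //; lia.
have lowT := level_card_take_block Q i j (size Q - 3).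
have := nblocks_set_nth (s |: nth set0 Q (size Q).-1) (_ : (size Q).-1 < size (take_block Q i j)).
rewrite sizeT level_card_take_block_neq ?top'; last lia.
move=> /(_ ltac:(lia)) blocks'.
rewrite /jenga_invariant size_set_nth sizeT (maxn_idPr _) ?ltn_predL; last lia.
rewrite !(level_card_set_nth (take_block Q i j)) nth_set_nth /= eqxx !ifN_eq ?nth_take_block
  ?top'; try lia.
by split=> //; lia.
Qed.

Lemma jenga_invariant_put_new k Q i j s : jenga_invariant k Q ->
  i.+1 < size Q -> j \in nth set0 Q i -> last set0 Q = setT ->
  jenga_invariant k (rcons (take_block Q i j) [set s]).
Proof.
move=> [h_ge3 full blocks low] lt_i Lj; rewrite -nth_last => top_full.
have sizeT : size (take_block Q i j) = size Q by apply: size_take_block; lia.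
have blocksT : (nblocks (take_block Q i j)).+1 = nblocks Q.
  by apply: nblocks_take_block => //; lia.
have lowT := level_card_take_block Q i j (size Q - 2).
have card_full : level_card Q (size Q - 2) = n by rewrite /level_card full cardsT card_ord.
rewrite /jenga_invariant size_rcons sizeT nblocks_rcons cards1 !level_card_rcons sizeT; try lia.
rewrite nth_rcons sizeT ifT; last lia.
rewrite nth_take_block; last lia.
have -> : (size Q).+1 - 2 = (size Q).-1 by lia.
have -> : (size Q).+1 - 3 = size Q - 2 by lia.
rewrite /= eqxx ifN_eq ?cards1; last lia.
by split=> //; lia.
Qed.

Lemma jenga_invariant_move k Q Q' : jenga_invariant k Q -> move Q Q' -> jenga_invariant k Q'.
Proof.
move=> inv [i [j [s [lt_i Lj top_not_below]]]] /=; rewrite -/(take_block Q i j).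
case: ifP => [top_lt [s_top ->]|/negbT top_full ->].
  by apply: jenga_invariant_put_top => //; rewrite ltn_neqAle top_not_below // eq_sym.
exact: jenga_invariant_put_new (full_level top_full).
Qed.

Lemma jenga_invariant_reachable k Q : 3 <= k -> reachable n k Q -> jenga_invariant k Q.
Proof.
move=> k_ge3; elim=> [|Q0 Q1 _ inv01 /(jenga_invariant_move inv01)] //.
exact: jenga_invariant_initial.
Qed.

End Invariant.

Lemma sum_pairs_telescope (r : nat -> int) h :
  (r 0%N + \sum_(0 <= y < h) (r y + r y.+1 - 2 * r y * r y.+1)
   = r h - 2 * \sum_(0 <= y < h) r y * (r y.+1 - 1))%R.
Proof.
elim: h => [|h IH]; first by rewrite !big_geq //; ring.
by rewrite !big_nat_recr //= addrA IH; ring.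
Qed.

Section Bound.
Variables (n : nat) (Q : config n).

Lemma two_sub_euler_char k : 0 < n -> jenga_invariant k Q ->
  (2 - euler_char Q = 2 * \sum_(0 <= y < size Q - 3)
                            Posz (level_runs Q y) * (Posz (level_runs Q y.+1) - 1))%R.
Proof.
move=> n_gt0 [h_ge3 full _ _].
rewrite euler_char_runs // (sum_pairs_telescope (fun y => Posz (level_runs Q y))).
rewrite level_runs_over //.
have [M sizeQ] : exists M, size Q = M.+3 by exists (size Q - 3); lia.
rewrite sizeQ in full *; rewrite (_ : M.+3 - 3 = M) ?subSS ?subn0 //.
rewrite !big_nat_recr //= (level_runs_full n_gt0 (y := M.+1)) //.
by rewrite (level_runs_over (y := M.+3)) ?sizeQ //; ring.
Qed.

Lemma sum_lower_level_cards k : jenga_invariant k Q ->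
  \sum_(0 <= y < size Q - 3) level_card Q y <= n * (k - 2).
Proof.
move=> [h_ge3 full blocks low].
have [M sizeQ] : exists M, size Q = M.+3 by exists (size Q - 3); lia.
have card_full : level_card Q M.+1 = n.
  by rewrite /level_card (_ : M.+1 = size Q - 2) ?full ?cardsT ?card_ord //; lia.
move: blocks low; rewrite nblocksE sizeQ (_ : M.+3 - 3 = M) ?subSS ?subn0 //.
by rewrite !big_nat_recr //= card_full mulnBr; lia.
Qed.

Lemma two_sub_euler_char_le k : ~~ odd n -> 1 < n -> jenga_invariant k Q ->
  (2 - euler_char Q <= Posz (n * (n - 2) * (k - 2)))%R.
Proof.
move=> n_even n_gt1 inv; rewrite (two_sub_euler_char _ inv); last lia.
apply: (@le_trans _ _ (\sum_(0 <= y < size Q - 3) Posz (level_card Q y * (n - 2)))%R).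
  rewrite mulr_sumr; apply: ler_sum => y _.
  have := level_runs_le_card Q y; have := runs_le_uphalf (occ_slot Q y.+1) n.
  rewrite uphalf_half (negbTE n_even) -/(level_runs Q y.+1) => r_half r_card.
  nia.
rewrite -(big_morph Posz PoszD (erefl (Posz 0))) lez_nat -big_distrl /= mulnAC leq_mul2r.
by rewrite sum_lower_level_cards ?orbT.
Qed.

End Bound.

Theorem mainTheorem5 (n k : nat) :
  ~~ odd n -> (2 <= n)%N -> (3 <= k)%N ->
  forall Q : config n, jenga_like n k Q ->
  (genus Q <= (n * (n - 2) * (k - 2))%:R / 2)%R.
Proof.
move=> n_even n_ge2 k_ge3 Q [reach _].
have := two_sub_euler_char_le n_even n_ge2 (jenga_invariant_reachable k_ge3 reach).
rewrite /genus => bound; apply: ler_wpM2r; first by rewrite invr_ge0 ler0n.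
by rewrite -[X in (_ <= X)%R]mulrz_nat ler_int natz.
Qed.
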